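(* There exist absolute constants $c_1,c_2>0$ such that for all integers $k\geq 1$ and $n\geq k+1$, there exists a connected graph $G_{k,n}$ with $\operatorname{tw}(G_{k,n})=k$ and $|V(G_{k,n})|=n$ such that $$c_1(n+k^2)\leq \operatorname{tw}(G_{k,n}\boxtimes G_{k,n})\leq c_2(n+k^2).$$
   Context: $\operatorname{tw}$ denotes treewidth. The strong product $G \boxtimes H$ has vertex set $V(G)\times V(H)$, with distinct vertices $(a,v),(b,u)$ adjacent iff ($a=b$ or $ab\in E(G)$) and ($u=v$ or $uv\in E(H)$). *)

From Stdlib Require Import Reals.
From mathcomp Require Import all_boot.
Set Implicit Arguments. Unset Strict Implicit. Unset Printing Implicit Defensive.

Definition simple_graph (V : finType) (e : rel V) : Prop :=
  symmetric e /\ irreflexive e.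

Definition connected_graph (V : finType) (e : rel V) : Prop :=
  forall x y : V, connect e x y.

Definition is_tree (I : finType) (t : rel I) : Prop :=
  0 < #|I| /\ simple_graph t /\ connected_graph t /\
  (forall c : seq I, 3 <= size c -> ~~ ucycleb t c).

Definition tree_decomposition (V I : finType) (e : rel V) (t : rel I)
    (B : I -> {set V}) : Prop :=
  [/\ is_tree t,
      (forall v : V, exists i : I, v \in B i),
      (forall u v : V, e u v -> exists i : I, (u \in B i) && (v \in B i)) &
      (forall (v : V) (i j : I), v \in B i -> v \in B j ->
          connect [rel a b | [&& t a b, v \in B a & v \in B b]] i j)].

Definition tw_le (V : finType) (e : rel V) (k : nat) : Prop :=
  exists (I : finType) (t : rel I) (B : I -> {set V}),
    tree_decomposition e t B /\ forall i : I, #|B i| <= k.+1.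

Definition tw_is (V : finType) (e : rel V) (k : nat) : Prop :=
  tw_le e k /\ forall j, tw_le e j -> k <= j.

Definition strong_prod (V W : finType) (e : rel V) (f : rel W) : rel (V * W) :=
  fun x y => [&& x != y, (x.1 == y.1) || e x.1 y.1 & (x.2 == y.2) || f x.2 y.2].

From Stdlib Require Import Reals Lra Classical.
From mathcomp Require Import all_boot zify.
Set Implicit Arguments. Unset Strict Implicit. Unset Printing Implicit Defensive.

(* G_{k,n} is the clique on {0,...,k} with the other n-k-1 vertices attached as
   pendant leaves to 0.  Its star decomposition (central bag {0,...,k}, a bag
   {0,v} for each leaf v) has width k, and the clique shows tw = k.  For G ⊠ G,
   the product of this decomposition with itself, whose central bag is enlarged
   by the axes {0}×V ∪ V×{0}, has width at most 2n + (k+1)^2.  Conversely the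
   clique {0,...,k}^2 and the n-1 pairs {(0,v),(v,0)} are brambles of disjoint,
   connected, pairwise touching sets; by the Helly property of subtrees of a tree
   some bag meets every member of such a bramble, so tw(G ⊠ G) + 1 is at least
   (k+1)^2 and n-1. *)

Section InducedConnectivity.
Variables (I : finType) (t : rel I).

Definition induced (S : {set I}) : rel I := fun a b => [&& a \in S, b \in S & t a b].

Definition connected_in (S : {set I}) : Prop :=
  forall x y, x \in S -> y \in S -> connect (induced S) x y.

Definition leaf_in (U : {set I}) (l : I) : Prop :=
  forall a b, a \in U -> b \in U -> t l a -> t l b -> a = b.

Lemma connected_in_setT : connected_graph t -> connected_in setT.
Proof.
move=> t_conn x y _ _; rewrite (@eq_connect _ _ t) // => a b.
by rewrite /induced !inE.
Qed.

Lemma connected_in_set1 (x : I) : connected_in [set x].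
Proof. by move=> a b; rewrite !inE => /eqP-> /eqP->; apply: connect0. Qed.

Lemma connected_in_set2 (x y : I) : t x y -> t y x -> connected_in [set x; y].
Proof.
move=> txy tyx a b; rewrite !inE => /orP[]/eqP-> /orP[]/eqP->;
  by [apply: connect0 | apply: connect1; rewrite /induced !inE !eqxx ?orbT].
Qed.

Lemma connected_in_nbr (S : {set I}) (l y : I) :
  connected_in S -> l \in S -> y \in S -> y != l -> exists2 h, h \in S & t l h.
Proof.
move=> S_conn lS yS yl; have /connectP[[|h p] p_path y_last] := S_conn l y lS yS.
  by rewrite y_last eqxx in yl.
by case/andP: p_path => /and3P[_ hS tlh] _; exists h.
Qed.

Lemma leaf_in_subset (U S : {set I}) (l : I) : S \subset U -> leaf_in U l -> leaf_in S l.
Proof. by move=> /subsetP SU l_leaf a b /SU aU /SU bU; apply: l_leaf. Qed.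

(* A shortest path avoids the leaf [l]: through [l] it would enter and leave
   along the same edge. *)
Lemma connected_in_setD1 (S : {set I}) (l : I) :
  symmetric t -> connected_in S -> leaf_in S l -> connected_in (S :\ l).
Proof.
move=> t_sym S_conn l_leaf x y; rewrite !in_setD1 => /andP[xl xS] /andP[yl yS].
have /connectP[p p_path y_last] := S_conn x y xS yS; subst y.
case/shortenP: p_path yl => q q_path q_uniq _ ql.
have lNq : l \notin q.
  apply/negP => lq; case/splitPr: lq q_path q_uniq ql => q1 [|b q2] q_path q_uniq ql.
    by rewrite last_cat eqxx in ql.
  move: q_path; rewrite cat_path /= => /and3P[_ /and3P[aS _ tal] /andP[/and3P[_ bS tlb] _]].
  have ab := l_leaf _ _ aS bS (etrans (t_sym _ _) tal) tlb.
  move: q_uniq; rewrite -cat_cons cat_uniq => /and3P[_ /hasPn/(_ b)] + _.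
  by rewrite !inE eqxx orbT => /(_ isT); rewrite -ab -in_cons mem_last.
apply/connectP; exists q => //.
apply: (sub_in_path (P := [pred u | u != l])) q_path => [u w|].
  by rewrite !inE /= => ul wl /and3P[uS wS tuw]; rewrite /induced !in_setD1 ul wl uS wS tuw.
by apply/allP => u; rewrite inE => /orP[/eqP-> // | uq]; apply: contraNneq lNq => <-.
Qed.

End InducedConnectivity.

Section Forest.
Variables (I : finType) (t : rel I).

Lemma exists_maximal_path (U : {set I}) (x : I) : x \in U ->
  exists p, [/\ path t x p, uniq (x :: p), {subset x :: p <= U} &
    forall w, w \in U -> t (last x p) w -> w \in x :: p].
Proof.
move=> xU; suff: forall p, path t x p -> uniq (x :: p) -> {subset x :: p <= U} ->
    exists p, [/\ path t x p, uniq (x :: p), {subset x :: p <= U} &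
      forall w, w \in U -> t (last x p) w -> w \in x :: p].
  by move/(_ [::]); apply=> // y; rewrite inE => /eqP->.
move=> p; have [n] := ubnP (#|I| - size p); elim: n => // n IHn in p *.
rewrite ltnS => le_n p_path p_uniq pU.
case: (pickP [pred w | [&& w \in U, t (last x p) w & w \notin x :: p]]) => [w | maximal].
  case/and3P=> wU tw wNp.
  have wp_uniq : uniq (x :: rcons p w) by rewrite -rcons_cons rcons_uniq wNp p_uniq.
  apply: (IHn (rcons p w)) => //.
  - have := max_card (mem (x :: rcons p w)).
    by rewrite (card_uniqP wp_uniq) /= size_rcons; move: #|I| le_n => N; lia.
  - by rewrite rcons_path p_path tw.
  - by move=> y; rewrite -rcons_cons mem_rcons inE => /orP[/eqP-> | /pU].
exists p; split=> // w wU tw; apply: contraFT (maximal w) => wNp.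
by rewrite /= wU tw wNp.
Qed.

Hypothesis t_irr : irreflexive t.
Hypothesis t_acyclic : forall c : seq I, 3 <= size c -> ~~ ucycleb t c.

(* Any other neighbour of the endpoint on the path would close a cycle. *)
Lemma uniq_path_adj_last (x : I) (p : seq I) (w : I) :
  path t x p -> uniq (x :: p) -> w \in x :: p -> t (last x p) w ->
  exists p1 y, p = rcons p1 y /\ last x p1 = w.
Proof.
move=> + + w_in; case/splitPl: w_in => p1 p2 wE.
case: p2 => [|y [|y2 p3]] p_path p_uniq tw.
- by rewrite cats0 wE t_irr in tw.
- by exists p1, y; rewrite cats1.
have := @t_acyclic [:: w, y, y2 & p3] isT; rewrite /ucycleb /=.
rewrite cat_path wE in p_path; case/andP: p_path => _ /= /and3P[-> -> p3_path].
rewrite -cat_cons cat_uniq in p_uniq; case/and3P: p_uniq => _ /hasPn w_out yp_uniq.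
have wNyp : w \notin [:: y, y2 & p3] by apply/negP => /w_out; rewrite -wE mem_last.
rewrite rcons_path p3_path /=; move: tw; rewrite last_cat wE => /= ->.
by rewrite wNyp /=; move: yp_uniq => /= ->.
Qed.

Lemma exists_leaf_in (U : {set I}) (x : I) : x \in U -> exists2 l, l \in U & leaf_in t U l.
Proof.
case/exists_maximal_path=> p [p_path p_uniq pU p_max].
exists (last x p); first exact/pU/mem_last.
move=> a b aU bU ta tb.
have [p1 [y [pE <-]]] := uniq_path_adj_last p_path p_uniq (p_max a aU ta) ta.
have [p2 [y2 [+ <-]]] := uniq_path_adj_last p_path p_uniq (p_max b bU tb) tb.
by rewrite pE => /rcons_inj[<-].
Qed.

Hypothesis t_sym : symmetric t.

(* Two subtrees through the leaf [l] of [U] both contain its unique neighbour. *)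
Lemma setD1_meet_leaf (U S1 S2 : {set I}) (l y1 y2 : I) :
  leaf_in t U l -> S1 \subset U -> S2 \subset U ->
  connected_in t S1 -> connected_in t S2 -> l \in S1 -> l \in S2 ->
  y1 \in S1 -> y1 != l -> y2 \in S2 -> y2 != l -> (S1 :\ l) :&: (S2 :\ l) != set0.
Proof.
move=> l_leaf /subsetP S1U /subsetP S2U S1_conn S2_conn l1 l2 y1S y1l y2S y2l.
have [h h1 tlh] := connected_in_nbr S1_conn l1 y1S y1l.
have [h' h2 tlh'] := connected_in_nbr S2_conn l2 y2S y2l.
have hh' : h = h' := l_leaf _ _ (S1U _ h1) (S2U _ h2) tlh tlh'; subst h'.
have hl : h != l by apply: contraTneq tlh => ->; rewrite t_irr.
by apply/set0Pn; exists h; rewrite inE !in_setD1 hl h1 h2.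
Qed.

Lemma helly_subtrees (J : finType) (A : {set J}) (S : J -> {set I}) (U : {set I}) :
  connected_in t U -> U != set0 ->
  {in A, forall j, S j \subset U} -> {in A, forall j, connected_in t (S j)} ->
  {in A &, forall j1 j2, S j1 :&: S j2 != set0} ->
  exists i, {in A, forall j, i \in S j}.
Proof.
have [n] := ubnP #|U|; elim: n => // n IHn in U S *.
rewrite ltnS => le_n U_conn /set0Pn[x xU] SU S_conn S_meet.
have [l lU l_leaf] := exists_leaf_in xU.
case: (boolP [exists j in A, S j \subset [set l]]) => [/exists_inP[j jA Sj_l] | S_off_l].
  exists l => j' j'A; have /set0Pn[i] := S_meet j j' jA j'A.
  by rewrite inE => /andP[/(subsetP Sj_l)]; rewrite inE => /eqP <-.
have S_y j : j \in A -> exists2 y, y \in S j & y != l.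
  move=> jA; have /subsetPn[y yS] : ~~ (S j \subset [set l]).
    by apply: contraNN S_off_l => Sj_l; apply/exists_inP; exists j.
  by rewrite inE; exists y.
have [/eqP A0 | /set0Pn[j0 j0A]] := boolP (A == set0); first by exists x => j; rewrite A0 inE.
have [i Hi] : exists i, {in A, forall j, i \in S j :\ l}; last first.
  by exists i => j /Hi /setD1P[].
apply: (IHn (U :\ l)).
- by move: le_n; rewrite (cardsD1 l) lU.
- exact: connected_in_setD1.
- have [y yS yl] := S_y j0 j0A.
  by apply/set0Pn; exists y; rewrite in_setD1 yl (subsetP (SU j0 j0A)).
- by move=> j jA; apply: setSD; apply: SU.
- move=> j jA; apply: connected_in_setD1 (S_conn j jA) _ => //.
  exact: leaf_in_subset (SU j jA) l_leaf.
move=> j1 j2 j1A j2A; have /set0Pn[i /setIP[i1 i2]] := S_meet j1 j2 j1A j2A.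
have [il | il] := eqVneq i l; last by apply/set0Pn; exists i; rewrite inE !in_setD1 il i1 i2.
subst i; have [y1 y1S y1l] := S_y j1 j1A; have [y2 y2S y2l] := S_y j2 j2A.
exact: setD1_meet_leaf l_leaf (SU j1 j1A) (SU j2 j2A) (S_conn j1 j1A) (S_conn j2 j2A)
  i1 i2 y1S y1l y2S y2l.
Qed.

End Forest.

Definition touch (V : finType) (e : rel V) (X Y : {set V}) : Prop :=
  exists u v, [&& u \in X, v \in Y & (u == v) || e u v].

Definition disjoint_bramble (V J : finType) (e : rel V) (A : {set J})
    (X : J -> {set V}) : Prop :=
  [/\ {in A, forall j, connected_in e (X j)},
      {in A &, forall j1 j2, touch e (X j1) (X j2)} &
      {in A &, forall j1 j2, X j1 :&: X j2 != set0 -> j1 = j2}].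

Lemma card_le_of_disjoint_meets (T J : finType) (A : {set J}) (X : J -> {set T}) (C : {set T}) :
  {in A, forall j, X j :&: C != set0} ->
  {in A &, forall j1 j2, X j1 :&: X j2 != set0 -> j1 = j2} -> #|A| <= #|C|.
Proof.
move=> XC X_disj; pose f j := [pick v in X j :&: C].
have fP j : j \in A -> exists2 v, f j = Some v & v \in X j :&: C.
  move=> jA; rewrite /f; case: pickP => [v vXC | none]; first by exists v.
  by case/set0Pn: (XC j jA) => v; rewrite none.
have f_inj : {in A &, injective f}.
  move=> j1 j2 j1A j2A; have [v1 -> /setIP[v1X _]] := fP j1 j1A.
  have [v2 -> /setIP[v2X _]] := fP j2 j2A; case=> v12; subst v2.
  by apply: X_disj => //; apply/set0Pn; exists v1; rewrite inE v1X v2X.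
rewrite -(card_in_imset f_inj) -(card_imset C (@Some_inj _)).
apply/subset_leq_card/subsetP => _ /imsetP[j jA ->].
by have [v -> /setIP[_ vC]] := fP j jA; apply: imset_f.
Qed.

Section BagsMeeting.
Variables (V I : finType) (e : rel V) (t : rel I) (B : I -> {set V}).
Hypothesis B_td : tree_decomposition e t B.

Definition bags_meeting (X : {set V}) : {set I} := [set i | X :&: B i != set0].

Lemma mem_bags_meeting (X : {set V}) (v : V) (i : I) :
  v \in X -> v \in B i -> i \in bags_meeting X.
Proof. by move=> vX vB; rewrite inE; apply/set0Pn; exists v; rewrite inE vX vB. Qed.

Lemma connected_in_bags_meeting (X : {set V}) :
  connected_in e X -> connected_in t (bags_meeting X).
Proof.
have [_ B_cover B_edge B_conn] := B_td.
have bags_of v i i' : v \in X -> v \in B i -> v \in B i' ->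
    connect (induced t (bags_meeting X)) i i'.
  move=> vX vi vi'; apply: connect_sub (B_conn v i i' vi vi') => a b /and3P[tab va vb].
  by apply: connect1; rewrite /induced tab !(mem_bags_meeting vX).
move=> X_conn i i'; rewrite !inE => /set0Pn[v /setIP[vX vi]] /set0Pn[v' /setIP[v'X v'i']].
have /connectP[p] := X_conn v v' vX v'X.
elim: p v i vX vi => [|w p IHp] v i vX vi /=.
  by move=> _ v'v; apply: (bags_of v) => //; rewrite -v'v.
case/andP=> /and3P[_ wX evw] p_path p_last.
have [j /andP[vj wj]] := B_edge _ _ evw.
exact: connect_trans (bags_of _ _ _ vX vi vj) (IHp _ _ wX wj p_path p_last).
Qed.

Lemma bags_meeting_touch (X Y : {set V}) :
  touch e X Y -> bags_meeting X :&: bags_meeting Y != set0.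
Proof.
have [_ B_cover B_edge _] := B_td.
case=> u [v /and3P[uX vY /orP[/eqP uv | euv]]].
  subst v; have [i ui] := B_cover u.
  by apply/set0Pn; exists i; rewrite inE !(mem_bags_meeting _ ui).
have [i /andP[ui vi]] := B_edge _ _ euv.
by apply/set0Pn; exists i; rewrite inE (mem_bags_meeting uX ui) (mem_bags_meeting vY vi).
Qed.

Lemma disjoint_bramble_card_le_bag (J : finType) (A : {set J}) (X : J -> {set V}) :
  disjoint_bramble e A X -> exists i, #|A| <= #|B i|.
Proof.
case=> X_conn X_touch X_disj; have [[I0 [[t_sym t_irr] [t_conn t_acyc]]] _ _ _] := B_td.
have [i Hi] : exists i, {in A, forall j, i \in bags_meeting (X j)}.
  apply: (helly_subtrees t_irr t_acyc t_sym (U := setT)).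
  - exact: connected_in_setT.
  - by case/card_gt0P: I0 => i _; apply/set0Pn; exists i; rewrite inE.
  - by move=> j _; apply: subsetT.
  - by move=> j jA; apply: connected_in_bags_meeting; apply: X_conn.
  - by move=> j1 j2 j1A j2A; apply: bags_meeting_touch; apply: X_touch.
by exists i; apply: card_le_of_disjoint_meets X_disj => j /Hi; rewrite inE.
Qed.

End BagsMeeting.

Lemma disjoint_bramble_card_le_tw (V J : finType) (e : rel V) (w : nat)
    (A : {set J}) (X : J -> {set V}) :
  tw_le e w -> disjoint_bramble e A X -> #|A| <= w.+1.
Proof.
case=> I [t [B [B_td B_w]]] X_bramble.
have [i le_i] := disjoint_bramble_card_le_bag B_td X_bramble.
exact: leq_trans le_i (B_w i).
Qed.

Definition clique (V : finType) (e : rel V) (C : {set V}) : Prop :=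
  forall x y, x \in C -> y \in C -> x != y -> e x y.

Lemma clique_card_le_tw (V : finType) (e : rel V) (w : nat) (C : {set V}) :
  tw_le e w -> clique e C -> #|C| <= w.+1.
Proof.
move=> e_w C_clique; apply: (disjoint_bramble_card_le_tw (X := fun x => [set x]) e_w).
split=> [x _ | x y xC yC | x y _ _ /set0Pn[v]]; first exact: connected_in_set1.
  by exists x, y; rewrite !inE !eqxx; case: eqVneq => //= xy; apply: C_clique.
by rewrite !inE => /andP[/eqP-> /eqP].
Qed.

Lemma strong_prod_sym (V W : finType) (e : rel V) (f : rel W) :
  symmetric e -> symmetric f -> symmetric (strong_prod e f).
Proof.
by move=> e_sym f_sym x y; rewrite /strong_prod eq_sym (eq_sym x.1) (eq_sym x.2) e_sym f_sym.
Qed.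

Lemma strong_prod_clique (V W : finType) (e : rel V) (f : rel W) (C : {set V}) (D : {set W}) :
  clique e C -> clique f D -> clique (strong_prod e f) (setX C D).
Proof.
move=> C_clique D_clique [x1 x2] [y1 y2]; rewrite !inE /= => /andP[x1C x2D] /andP[y1C y2D] xy.
rewrite /strong_prod xy /=.
by apply/andP; split; case: eqVneq => //= ?; [apply: C_clique | apply: D_clique].
Qed.

Lemma nbrs_card_le_tw_strong_prod (V : finType) (e : rel V) (h : V) (P : {set V}) (w : nat) :
  simple_graph e -> {in P, forall v, e h v} -> tw_le (strong_prod e e) w -> #|P| <= w.+1.
Proof.
move=> [e_sym e_irr] hP ee_w.
have hNP : h \notin P by apply/negP => /hP; rewrite e_irr.
have adj u v : u \in P -> v \in P -> strong_prod e e (h, u) (v, h).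
  move=> uP vP; rewrite /strong_prod /= hP // e_sym hP // !orbT !andbT.
  by apply: contraTneq (hP v vP) => -[->]; rewrite e_irr.
apply: (disjoint_bramble_card_le_tw (X := fun v => [set (h, v); (v, h)]) ee_w).
split=> [v vP | u v uP vP | u v uP vP /set0Pn[[x1 x2]]].
- by apply: connected_in_set2; [apply: adj | rewrite strong_prod_sym //; apply: adj].
- by exists (h, u), (v, h); rewrite !inE !eqxx adj ?orbT.
have uh : u != h by apply: contraNneq hNP => <-.
rewrite !inE !xpair_eqE; case/andP=> /orP[]/andP[/eqP-> /eqP->] /orP[]/andP[/eqP e1 /eqP e2] //.
all: by subst; rewrite eqxx in uh.
Qed.

Definition star (I : finType) (c : I) : rel I := fun a b => (a == c) != (b == c).

Lemma connect_via (I : finType) (R : rel I) (P : pred I) (c : I) :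
  (forall a, P a -> a != c -> R a c && R c a) -> forall x y, P x -> P y -> connect R x y.
Proof.
move=> Rc x y Px Py; apply: (@connect_trans _ _ c).
  by case: (eqVneq x c) => [-> | xc]; [apply: connect0 | apply/connect1; case/andP: (Rc x Px xc)].
by case: (eqVneq y c) => [-> | yc]; [apply: connect0 | apply/connect1; case/andP: (Rc y Py yc)].
Qed.

(* Rotate a would-be cycle to start at the centre: its next two vertices are
   then adjacent leaves. *)
Lemma star_tree (I : finType) (c : I) : is_tree (star c).
Proof.
split; first by apply/card_gt0P; exists c.
split; first by split=> [a b | a]; rewrite /star; [case: (a == c); case: (b == c) | case: (a == c)].
split=> [x y | cs size_cs].
  by apply: (connect_via (P := predT) (c := c)) => // a _ ac; rewrite /star eqxx (negbTE ac).
apply/negP => /andP[cs_cycle cs_uniq].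
have [c_in | c_notin] := boolP (c \in cs).
  case/rot_to: c_in cs_cycle cs_uniq size_cs => i s cs_rot.
  rewrite -(rot_cycle i) -(rot_uniq i) -(size_rot i) cs_rot.
  case: s {cs_rot} => [|x [|y s]] //= /andP[_ /andP[+ _]] /andP[+ /andP[+ _]] _.
  rewrite !inE !negb_or => + /and3P[cx cy _] _.
  by rewrite /star (eq_sym x) (eq_sym y) (negbTE cx) (negbTE cy).
case: cs c_notin cs_cycle size_cs {cs_uniq} => [|x [|y s]] //=.
rewrite !inE !negb_or => /and3P[cx cy _].
by rewrite /star (eq_sym x) (eq_sym y) (negbTE cx) (negbTE cy).
Qed.

Lemma star_tree_decomposition (V I : finType) (e : rel V) (c : I) (B : I -> {set V}) :
  (forall v, exists i, v \in B i) ->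
  (forall u v, e u v -> exists i, (u \in B i) && (v \in B i)) ->
  (forall v i j, v \in B i -> v \in B j -> i = j \/ v \in B c) ->
  tree_decomposition e (star c) B.
Proof.
move=> B_cover B_edge B_uniq; split=> //; first exact: star_tree.
move=> v i j vi vj; case: (B_uniq v i j vi vj) => [<- | vc]; first exact: connect0.
apply: (connect_via (P := fun a => v \in B a) (c := c)) => // a va ac.
by rewrite /= /star eqxx (negbTE ac) va vc.
Qed.

Definition hub_decomposition (V I : finType) (e : rel V) (c : I) (h : V)
    (B : I -> {set V}) : Prop :=
  [/\ forall v, exists i, v \in B i,
      forall u v, e u v -> exists i, (u \in B i) && (v \in B i),
      h \in B c &
      forall v i j, v != h -> v \in B i -> v \in B j -> i = j].

Lemma hub_tree_decomposition (V I : finType) (e : rel V) (c : I) (h : V) (B : I -> {set V}) :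
  hub_decomposition e c h B -> tree_decomposition e (star c) B.
Proof.
case=> B_cover B_edge hc B_uniq; apply: star_tree_decomposition => // v i j vi vj.
by case: (eqVneq v h) => [-> | vh]; [right | left; apply: B_uniq vh vi vj].
Qed.

Section StrongProductDecomposition.
Variables (V W I K : finType) (e : rel V) (f : rel W).
Variables (c : I) (g : V) (B : I -> {set V}) (d : K) (h : W) (D : K -> {set W}).
Hypotheses (B_hub : hub_decomposition e c g B) (D_hub : hub_decomposition f d h D).

Definition prod_bag (p : I * K) : {set V * W} :=
  if p == (c, d) then setX (B c) (D d) :|: setX [set g] setT :|: setX setT [set h]
  else setX (B p.1) (D p.2).

Lemma subset_prod_bag (p : I * K) : setX (B p.1) (D p.2) \subset prod_bag p.
Proof. by rewrite /prod_bag; case: eqP => [-> | _]; [rewrite -setUA subsetUl | apply: subxx]. Qed.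

Lemma mem_prod_bag_off_axes (p : I * K) (v : V * W) : v.1 != g -> v.2 != h ->
  (v \in prod_bag p) = (v.1 \in B p.1) && (v.2 \in D p.2).
Proof.
move=> vg vh; rewrite /prod_bag; case: eqP => [-> | _]; last by rewrite inE.
by rewrite !inE (negbTE vg) (negbTE vh) /= !orbF.
Qed.

Lemma prod_bag_tree_decomposition :
  tree_decomposition (strong_prod e f) (star (c, d)) prod_bag.
Proof.
have [B_cover B_edge _ B_uniq] := B_hub; have [D_cover D_edge _ D_uniq] := D_hub.
have B_bag x y : (x == y) || e x y -> exists i, (x \in B i) && (y \in B i).
  by case/orP=> [/eqP<- | /B_edge //]; have [i xi] := B_cover x; exists i; rewrite xi.
have D_bag x y : (x == y) || f x y -> exists j, (x \in D j) && (y \in D j).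
  by case/orP=> [/eqP<- | /D_edge //]; have [j xj] := D_cover x; exists j; rewrite xj.
apply: star_tree_decomposition.
- move=> [v w]; have [i vi] := B_cover v; have [j wj] := D_cover w.
  by exists (i, j); apply: (subsetP (subset_prod_bag _)); rewrite inE vi wj.
- move=> x y /and3P[_ /B_bag[i /andP[xi yi]] /D_bag[j /andP[xj yj]]].
  by exists (i, j); rewrite !(subsetP (subset_prod_bag (i, j))) // inE ?xi ?xj ?yi ?yj.
move=> v p q vp vq.
have [vg | vg] := eqVneq v.1 g; first by right; rewrite /prod_bag eqxx !inE vg eqxx /= orbT.
have [vh | vh] := eqVneq v.2 h; first by right; rewrite /prod_bag eqxx !inE vh eqxx /= orbT.
left; move: vp vq; rewrite !mem_prod_bag_off_axes // => /andP[vp1 vp2] /andP[vq1 vq2].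
case: p q vp1 vp2 vq1 vq2 => [i j] [i' j'] /= *.
by congr pair; [apply: B_uniq vg _ _ | apply: D_uniq vh _ _].
Qed.

Lemma tw_le_strong_prod_hub (w w' : nat) :
  (forall i, #|B i| <= w.+1) -> (forall j, #|D j| <= w'.+1) ->
  tw_le (strong_prod e f) (#|V| + #|W| + w.+1 * w'.+1).
Proof.
move=> B_w D_w; exists (I * K)%type, (star (c, d)), prod_bag.
split=> [|p]; first exact: prod_bag_tree_decomposition.
have := leq_mul (B_w p.1) (D_w p.2); have := leq_mul (B_w c) (D_w d).
rewrite /prod_bag; case: eqP => _; rewrite ?cardsU !cardsX ?cards1 ?cardsT; lia.
Qed.

End StrongProductDecomposition.

Lemma exists_tw_is_le (V : finType) (e : rel V) (w : nat) :
  tw_le e w -> exists2 m, tw_is e m & m <= w.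
Proof.
elim/ltn_ind: w => w IHw e_w.
case: (classic (exists2 j, j < w & tw_le e j)) => [[j jw e_j] | no_smaller].
  by have [m e_m mj] := IHw j jw e_j; exists m => //; apply: leq_trans mj (ltnW jw).
exists w => //; split=> // j e_j; rewrite leqNgt; apply/negP => jw.
by apply: no_smaller; exists j.
Qed.

Definition pendant_clique (k n : nat) : rel 'I_n :=
  fun a b => (a != b) && ((a <= k) && (b <= k) || (a == 0 :> nat) || (b == 0 :> nat)).
Arguments pendant_clique : clear implicits.

Lemma pendant_clique_simple (k n : nat) : simple_graph (pendant_clique k n).
Proof.
split=> [a b | a]; rewrite /pendant_clique ?eqxx // eq_sym; congr (_ && _).
by rewrite andbC -!orbA [(a == 0 :> nat) || _]orbC.
Qed.

Section PendantClique.
Variables (k n : nat).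
Hypothesis k_lt_n : k < n.

Let hub : 'I_n := Ordinal (leq_ltn_trans (leq0n k) k_lt_n).

Definition low_vertices : {set 'I_n} := [set v : 'I_n | v <= k].

Lemma card_low_vertices : #|low_vertices| = k.+1.
Proof.
have widen_inj : injective (widen_ord k_lt_n) by move=> a b [ab]; apply: val_inj.
rewrite -[k.+1]card_ord -cardsT -(card_imset _ widen_inj); apply: eq_card => v.
rewrite !inE; apply/idP/imsetP => [vk | [u _ ->]]; last by rewrite /= -ltnS ltn_ord.
by exists (Ordinal (vk : v < k.+1)) => //; apply: val_inj.
Qed.

Lemma low_vertices_clique : clique (pendant_clique k n) low_vertices.
Proof. by move=> a b; rewrite !inE /pendant_clique => -> -> ->. Qed.

Lemma pendant_clique_connected : connected_graph (pendant_clique k n).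
Proof.
move=> x y; apply: (connect_via (P := predT) (c := hub)) => // a _ ah.
by rewrite /pendant_clique /= !orbT !andbT ah eq_sym.
Qed.

Definition pendant_bag (i : 'I_n) : {set 'I_n} :=
  if i == hub then low_vertices else if i <= k then set0 else [set hub; i].

Definition home_bag (v : 'I_n) : 'I_n := if v <= k then hub else v.

Lemma mem_home_bag (v : 'I_n) :
  (v \in pendant_bag (home_bag v)) && (hub \in pendant_bag (home_bag v)).
Proof.
rewrite /home_bag; case: ifP => vk; rewrite /pendant_bag; first by rewrite eqxx !inE vk.
have -> : (v == hub) = false by rewrite -val_eqE /=; lia.
by rewrite vk !inE !eqxx orbT.
Qed.

Lemma pendant_bag_home (v i : 'I_n) : v != hub -> v \in pendant_bag i -> i = home_bag v.
Proof.
rewrite /pendant_bag /home_bag => vh; case: ifP => [/eqP-> | _]; first by rewrite inE => ->.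
case: ifP => [_ | ik]; first by rewrite inE.
by rewrite !inE (negbTE vh) => /eqP->; rewrite ik.
Qed.

Lemma pendant_bag_hub_decomposition :
  hub_decomposition (pendant_clique k n) hub hub pendant_bag.
Proof.
split=> [v | u v | | v i j vh /(pendant_bag_home vh)-> /(pendant_bag_home vh)->] //.
- by exists (home_bag v); case/andP: (mem_home_bag v).
- case/andP=> _ /orP[/orP[/andP[uk vk] | u0] | v0].
  + by exists hub; rewrite /pendant_bag eqxx !inE uk vk.
  + have -> : u = hub by apply: val_inj; apply/eqP.
    by exists (home_bag v); rewrite andbC mem_home_bag.
  + have -> : v = hub by apply: val_inj; apply/eqP.
    by exists (home_bag u); rewrite mem_home_bag.
by rewrite /pendant_bag eqxx inE.
Qed.

Lemma card_pendant_bag (i : 'I_n) : 1 <= k -> #|pendant_bag i| <= k.+1.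
Proof.
move=> k_ge1; rewrite /pendant_bag; case: ifP => _; first by rewrite card_low_vertices.
by case: ifP => _; rewrite ?cards0 ?cards2 //; case: (_ != _) => /=; lia.
Qed.

Lemma pendant_clique_tw : 1 <= k -> tw_is (pendant_clique k n) k.
Proof.
move=> k_ge1; split=> [|j tw_j].
  exists 'I_n, (star hub), pendant_bag; split; last by move=> i; apply: card_pendant_bag.
  exact: hub_tree_decomposition pendant_bag_hub_decomposition.
by have := clique_card_le_tw tw_j low_vertices_clique; rewrite card_low_vertices.
Qed.

Lemma pendant_clique_strong_prod_tw_le : 1 <= k ->
  tw_le (strong_prod (pendant_clique k n) (pendant_clique k n)) (n + n + k.+1 * k.+1).
Proof.
move=> k_ge1; have bag_k i := card_pendant_bag i k_ge1.
have := tw_le_strong_prod_hub pendant_bag_hub_decomposition pendant_bag_hub_decomposition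
  bag_k bag_k.
by rewrite card_ord.
Qed.

Lemma pendant_clique_strong_prod_tw_ge (w : nat) :
  tw_le (strong_prod (pendant_clique k n) (pendant_clique k n)) w ->
  k.+1 * k.+1 <= w.+1 /\ n.-1 <= w.+1.
Proof.
move=> tw_w; split.
  have := clique_card_le_tw tw_w (strong_prod_clique low_vertices_clique low_vertices_clique).
  by rewrite cardsX card_low_vertices.
have := nbrs_card_le_tw_strong_prod (h := hub) (P := [set~ hub])
  (pendant_clique_simple k n) _ tw_w.
rewrite cardsC1 card_ord; apply=> v; rewrite !inE => vh.
by rewrite /pendant_clique eq_sym vh /= !orbT.
Qed.

End PendantClique.

Theorem mainTheorem9 :
  exists c1 c2 : R, Rlt 0 c1 /\ Rlt 0 c2 /\
    forall k n : nat, 1 <= k -> k.+1 <= n ->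
      exists G : rel 'I_n,
        [/\ simple_graph G, connected_graph G, tw_is G k &
            exists m : nat, tw_is (strong_prod G G) m /\
              Rle (Rmult c1 (INR (n + k ^ 2))) (INR m) /\
              Rle (INR m) (Rmult c2 (INR (n + k ^ 2)))].
Proof.
exists (Rinv (IZR 2)), (IZR 4); do 2 (split; first lra).
move=> k n k_ge1 k_lt_n; exists (pendant_clique k n); split.
- exact: pendant_clique_simple.
- exact: pendant_clique_connected.
- exact: pendant_clique_tw.
have [m tw_m m_le] := exists_tw_is_le (pendant_clique_strong_prod_tw_le k_lt_n k_ge1).
exists m; split=> //.
have [clique_bound hub_bound] := pendant_clique_strong_prod_tw_ge k_lt_n tw_m.1.
have /leP/le_INR lower : n + k ^ 2 <= 2 * m by nia.
have /leP/le_INR upper : m <= 4 * (n + k ^ 2) by nia.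
rewrite !mult_INR /= in lower upper; lra.
Qed.
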